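(* For every $\alpha\in[\tfrac12,1)$ there is a sequence of instances $(\mathcal{T}_n,w_n)$ (finite trees with $w_n:V(\mathcal{T}_n)\to\mathbb{R}_{\ge0}$) with $w_n(\mathcal{T}_n)=1$ and $\lim_{n\to\infty}\mathtt{OPT}(\mathcal{T}_n,w_n)=\infty$, such that $$\mathtt{cent}^\alpha(\mathcal{T}_n,w_n)\ge\frac{1}{1-\alpha}\mathtt{OPT}(\mathcal{T}_n,w_n)-\frac{\alpha}{1-\alpha}.$$
   Context: For a subgraph $\mathcal{H}$ of $\mathcal{T}$, $w(\mathcal{H})=\sum_{x\in V(\mathcal{H})}w(x)$. A search tree on a tree $\mathcal{T}$ is a rooted tree $T$ with vertex set $V(\mathcal{T})$ defined recursively: its root is an arbitrary vertex $r$, and the children of $r$ are the roots of search trees built on the connected components of $\mathcal{T}-r$; a single-vertex tree has only itself as search tree. $\mathtt{cost}_w(T)=\sum_x w(x)\,\mathtt{depth}_T(x)$ with root depth $1$; $\mathtt{OPT}(\mathcal{T},w)$ is the minimum cost over all search trees on $\mathcal{T}$. For $0\le\alpha\le1$, a vertex $v$ is an $\alpha$-centroid of $(\mathcal{T},w)$ if every component $\mathcal{H}$ of $\mathcal{T}-v$ has $w(\mathcal{H})\le\alpha\, w(\mathcal{T})$. A search tree $T$ is an $\alpha$-centroid tree if every vertex $x$ is an $\alpha$-centroid of $(\mathcal{T}[V(T_x)],w)$, where $T_x$ is the subtree of $T$ rooted at $x$. $\mathtt{cent}^\alpha(\mathcal{T},w)$ is the maximum cost of an $\alpha$-centroid tree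 of $(\mathcal{T},w)$, or $0$ if none exists. *)

From mathcomp Require Import all_boot all_order all_algebra.
From mathcomp Require Import boolp reals.
Set Implicit Arguments. Unset Strict Implicit. Unset Printing Implicit Defensive.
Import Order.TTheory GRing.Theory Num.Theory.
Local Open Scope ring_scope.

Section Trees.
Variable T : finType.

(** A finite tree: a simple graph (symmetric, irreflexive edge relation)
    that is connected and has exactly #|V|-1 edges (i.e. is acyclic).
    Edges are counted as ordered pairs, hence the factor 2. *)
Definition is_tree (e : rel T) : Prop :=
  [/\ symmetric e, irreflexive e, (0 < #|T|)%N,
      (forall x y, connect e x y) &
      #|[set p : T * T | e p.1 p.2]| = (2 * (#|T| - 1))%N].

Definition induced (e : rel T) (A : {set T}) : rel T :=
  [rel x y | [&& x \in A, y \in A & e x y]].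

Definition comp (e : rel T) (A : {set T}) (x : T) : {set T} :=
  [set y in A | connect (induced e A) x y].

Definition comps (e : rel T) (A : {set T}) : {set {set T}} :=
  [set comp e A x | x in A].

Inductive rtree := Node of T & seq rtree.

Definition root (t : rtree) : T := let: Node r _ := t in r.

Fixpoint vset (t : rtree) : {set T} :=
  let: Node r cs := t in r |: foldr (fun c acc => vset c :|: acc) set0 cs.

(** Recursive search-tree condition: the children of the root r are roots
    of search trees built on the connected components of (vertex set) - r,
    one child per component. *)
Fixpoint valid_st (e : rel T) (t : rtree) : bool :=
  let: Node r cs := t in
  perm_eq [seq vset c | c <- cs] (enum (comps e (vset t :\ r)))
  && all (valid_st e) cs.

Definition search_tree (e : rel T) (t : rtree) : bool :=
  valid_st e t && (vset t == [set: T]).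

Variable R : realType.

Definition wsum (w : T -> R) (A : {set T}) : R := \sum_(x in A) w x.

(** sum_x w(x) * depth(x), root at depth d. *)
Fixpoint costd (w : T -> R) (d : nat) (t : rtree) : R :=
  let: Node r cs := t in
  w r * d%:R + foldr (fun c acc => costd w d.+1 c + acc) 0 cs.

Definition cost (w : T -> R) (t : rtree) : R := costd w 1 t.

Definition is_centroid (e : rel T) (w : T -> R) (alpha : R)
    (S : {set T}) (v : T) : bool :=
  [forall H in comps e (S :\ v), wsum w H <= alpha * wsum w S].

Fixpoint centroid_nodes (e : rel T) (w : T -> R) (alpha : R) (t : rtree)
    : bool :=
  let: Node r cs := t in
  is_centroid e w alpha (vset t) r && all (centroid_nodes e w alpha) cs.

Definition centroid_tree (e : rel T) (w : T -> R) (alpha : R) (t : rtree)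
    : bool :=
  search_tree e t && centroid_nodes e w alpha t.

(** OPT(T, w): minimum cost over all search trees (the set is finite and
    nonempty, so the infimum is a minimum). *)
Definition OPT (e : rel T) (w : T -> R) : R :=
  inf (fun c : R => exists t, search_tree e t /\ c = cost w t).

Definition cent (e : rel T) (w : T -> R) (alpha : R) : R :=
  if `[< exists t, centroid_tree e w alpha t >] then
    sup (fun c : R => exists t, centroid_tree e w alpha t /\ c = cost w t)
  else 0.

End Trees.

(* Fix alpha in [1/2, 1).  [V n.+1] consists of two copies of [V n] whose base
   vertices are joined to a new vertex of weight 0, the left copy carrying the
   weights [alpha * W n] and the right one [(1 - alpha) * W n].  Rooting at the
   new vertex and recursing into both copies gives an alpha-centroid tree of
   cost n + 1.  Rooting instead at the base vertex, with the right copy hung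
   below it, gives a search tree of cost 1 + n (1 - alpha), and this is optimal:
   a search tree separates the two halves of an embedded copy of [V k] at the
   first vertex of the copy it meets, so one half sinks one level deeper, which
   costs at least min(alpha, 1 - alpha) = 1 - alpha at each of the k levels.
   Hence cent >= n + 1 = (OPT - alpha) / (1 - alpha). *)

From Pilot Require Import Defs.
From HB Require Import structures.
From mathcomp Require Import all_boot all_order all_algebra.
From mathcomp Require Import boolp reals.
From mathcomp Require Import ring lra zify.
Set Implicit Arguments. Unset Strict Implicit. Unset Printing Implicit Defensive.
Import Order.TTheory GRing.Theory Num.Theory.
Local Open Scope ring_scope.

Local Notation comp := Defs.comp.
Local Notation root := Defs.root.

Lemma homo_connect (T T' : finType) (f : T -> T') (e : rel T) (e' : rel T') :
  {homo f : x y / e x y >-> e' x y} ->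
  {homo f : x y / connect e x y >-> connect e' x y}.
Proof.
move=> fe x y /connectP [p pth ->]; apply/connectP; exists (map f p); last first.
  by rewrite last_map.
by elim: p x pth => //= z p IH x /andP [exz pth]; rewrite fe //=; apply: IH.
Qed.

Section Components.
Variables (T : finType) (e : rel T).
Implicit Types (A B : {set T}) (x y : T).

Lemma comp_sub A x : comp e A x \subset A.
Proof. by apply/subsetP => y; rewrite inE => /andP []. Qed.

Lemma comp_in_comps A x : x \in A -> comp e A x \in comps e A.
Proof. by move=> xA; apply/imsetP; exists x. Qed.

Lemma comps_sub A H : H \in comps e A -> H \subset A.
Proof. by case/imsetP => x _ ->; apply: comp_sub. Qed.

Lemma comps_set0 : comps e set0 = set0.
Proof. by rewrite /comps imset0. Qed.

Lemma induced_mono A B : A \subset B ->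
  subrel (induced e A) (induced e B).
Proof.
by move=> /subsetP sAB x y /and3P [xA yA exy]; rewrite /induced /= !sAB.
Qed.

Lemma comp_mono A B x : A \subset B -> comp e A x \subset comp e B x.
Proof.
move=> sAB; apply/subsetP => y; rewrite !inE => /andP [yA cxy].
rewrite (subsetP sAB) //=; exact: homo_connect (induced_mono sAB) _ _ cxy.
Qed.

Lemma comps_connected A x0 :
  x0 \in A -> {in A &, forall x y, connect (induced e A) x y} ->
  comps e A = [set A].
Proof.
move=> x0A cA; have compA x : x \in A -> comp e A x = A.
  by move=> xA; apply/setP => y; rewrite inE; case: (boolP (y \in A)) => // /(cA x)->.
apply/setP => B; rewrite inE; apply/imsetP/eqP => [[x xA ->]|->]; first exact: compA.
by exists x0; rewrite ?compA.
Qed.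

Lemma comp_setU A B x :
  {in A & B, forall x y, ~~ e x y} -> x \in A ->
  comp e (A :|: B) x = comp e A x.
Proof.
move=> nAB xA; apply/eqP; rewrite eqEsubset [X in _ && X]comp_mono ?subsetUl // andbT.
apply/subsetP => y; rewrite !inE => /andP [_ /connectP [p pth ->]].
elim: p x xA pth => [|z p IH] x xA /=; first by rewrite xA connect0.
case/andP => /and3P [_ zAB exz] pth; have zA : z \in A.
  by case/setUP: zAB => // zB; rewrite (negbTE (nAB x z xA zB)) in exz.
have /andP [-> czl] := IH z zA pth; apply: connect_trans czl.
by apply: connect1; rewrite /induced /= xA zA.
Qed.

Lemma comps_setU A B :
  {in A & B, forall x y, ~~ e x y} -> {in B & A, forall x y, ~~ e x y} ->
  comps e (A :|: B) = comps e A :|: comps e B.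
Proof.
move=> nAB nBA; rewrite /comps imsetU; congr (_ :|: _); apply: eq_in_imset => x xB.
  exact: comp_setU.
by rewrite setUC; apply: comp_setU.
Qed.

Lemma comps_set1 x : comps e [set x] = [set [set x]].
Proof.
apply: (comps_connected (set11 x)) => u v /set1P -> /set1P ->; exact: connect0.
Qed.

Lemma comps_setT x0 : (forall x y, connect e x y) -> comps e [set: T] = [set [set: T]].
Proof.
move=> ce; apply: (comps_connected (in_setT x0)) => x y _ _.
by apply: homo_connect (ce x y) => u v euv; rewrite /induced /= !in_setT.
Qed.

End Components.

Section Embedding.
Variables (T T' : finType) (f : T -> T') (e : rel T) (e' : rel T').
Hypotheses (f_inj : injective f) (f_edge : forall x y, e' (f x) (f y) = e x y).

Lemma connect_induced_imset (A : {set T}) x y :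
  connect (induced e' (f @: A)) (f x) (f y) = connect (induced e A) x y.
Proof.
apply/idP/idP; last first.
  by apply: homo_connect => u v /and3P [uA vA euv]; rewrite /induced /= !imset_f ?f_edge.
pose g y' := odflt x [pick a | f a == y'].
have fK : cancel f g.
  by move=> a; rewrite /g; case: pickP => [b /eqP/f_inj -> //|/(_ a)]; rewrite eqxx.
move=> /(@homo_connect _ _ g _ (induced e A)); rewrite !fK; apply.
move=> _ _ /and3P [/imsetP [a aA ->] /imsetP [b bA ->]].
by rewrite /induced /= !fK aA bA f_edge.
Qed.

Lemma comps_imset (A : {set T}) :
  comps e' (f @: A) = [set f @: (H : {set T}) | H in comps e A].
Proof.
rewrite /comps -!imset_comp; apply: eq_in_imset => x xA /=.
apply/setP => y'; rewrite inE; apply/andP/imsetP => [[/imsetP [y yA ->] cxy]|].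
  by exists y; rewrite // inE yA -connect_induced_imset.
by move=> [y /[!inE] /andP [yA cxy] ->]; rewrite imset_f ?connect_induced_imset.
Qed.

End Embedding.

Lemma perm_rcons_enum (A : finType) (s : seq A) (X : {set A}) x :
  perm_eq s (enum X) -> x \notin X -> perm_eq (rcons s x) (enum (x |: X)).
Proof.
move=> pe xX; apply: uniq_perm; rewrite ?enum_uniq //.
  by rewrite rcons_uniq (perm_uniq pe) enum_uniq (perm_mem pe) mem_enum xX.
by move=> y; rewrite mem_rcons in_cons (perm_mem pe) !mem_enum in_setU1.
Qed.

Section RootedTrees.
Variable T : finType.

Fixpoint rtree_code (t : rtree T) : GenTree.tree T :=
  let: Node r cs := t in GenTree.Node 0 (GenTree.Leaf r :: map rtree_code cs).

Fixpoint rtree_decode (c : GenTree.tree T) : option (rtree T) :=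
  if c is GenTree.Node _ (GenTree.Leaf r :: cs) then
    Some (Node r (pmap rtree_decode cs))
  else None.

Lemma rtree_codeK : pcancel rtree_code rtree_decode.
Proof.
rewrite /pcancel; fix IH 1 => -[r cs] /=; congr (Some (Node r _)).
by elim: cs => //= c cs IHcs; rewrite IH /= IHcs.
Qed.

HB.instance Definition _ := Equality.copy (rtree T) (pcan_type rtree_codeK).

(* [rtree_ind] has no hypothesis on the children of a node; the inner [fix]
   keeps this proof structurally recursive. *)
Lemma rtree_ind_in (P : rtree T -> Prop) :
  (forall r cs, {in cs, forall c, P c} -> P (Node r cs)) -> forall t, P t.
Proof.
move=> IHn; fix IH 1 => -[r cs]; apply: IHn; move: cs.
fix IHcs 1 => -[|c0 cs] c; first by rewrite in_nil => c_nil; discriminate c_nil.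
by rewrite in_cons => /predU1P [->|]; [apply: IH | apply: IHcs].
Qed.

Implicit Types (e : rel T) (r : T) (t c : rtree T) (cs : seq (rtree T)).

Lemma vsetE r cs : vset (Node r cs) = r |: \bigcup_(c <- cs) vset c.
Proof.
by rewrite /=; congr (_ |: _); elim: cs => [|c cs /= ->]; rewrite ?big_nil ?big_cons.
Qed.

Lemma root_in_vset t : root t \in vset t.
Proof. by case: t => r cs; rewrite vsetE setU11. Qed.

Lemma valid_stE e r cs : valid_st e (Node r cs) =
  perm_eq [seq vset c | c <- cs] (enum (comps e (vset (Node r cs) :\ r)))
  && all (valid_st e) cs.
Proof. by []. Qed.

Lemma vset_leaf r : vset (Node r [::]) = [set r].
Proof. by rewrite vsetE big_nil setU0. Qed.

Lemma valid_leaf e r : valid_st e (Node r [::]).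
Proof. by rewrite valid_stE vset_leaf setDv comps_set0 enum_set0. Qed.

Lemma valid_child e r cs c : valid_st e (Node r cs) -> c \in cs -> valid_st e c.
Proof. by rewrite valid_stE => /andP [_ /allP]; apply. Qed.

Lemma mem_comps_valid e r cs (H : {set T}) : valid_st e (Node r cs) ->
  (H \in comps e (vset (Node r cs) :\ r)) = (H \in [seq vset c | c <- cs]).
Proof. by rewrite valid_stE => /andP [pe _]; rewrite (perm_mem pe) mem_enum. Qed.

Lemma sub_child e r cs (Y : {set T}) :
  valid_st e (Node r cs) -> Y \subset vset (Node r cs) :\ r -> comps e Y = [set Y] ->
  exists2 c, c \in cs & Y \subset vset c.
Proof.
move=> va sY cY; have [y0 y0Y] : exists y0, y0 \in Y.
  apply/set0Pn; apply: contraTneq (set11 Y) => Y0.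
  by rewrite -cY Y0 comps_set0 inE.
have compY : comp e Y y0 = Y by apply/set1P; rewrite -cY comp_in_comps.
have := comp_in_comps e (subsetP sY y0 y0Y).
rewrite (mem_comps_valid _ va) => /mapP [c cin compc]; exists c => //.
by rewrite -compc -{1}compY comp_mono.
Qed.

Section Costs.
Variable R : realType.
Implicit Types (w : T -> R) (d : nat).

Fixpoint mass w t : R :=
  let: Node r cs := t in w r + foldr (fun c acc => mass w c + acc) 0 cs.

Lemma massE w r cs : mass w (Node r cs) = w r + \sum_(c <- cs) mass w c.
Proof.
by rewrite /=; congr (_ + _); elim: cs => [|c cs /= ->]; rewrite ?big_nil ?big_cons.
Qed.

Lemma costdE w d r cs :
  costd w d (Node r cs) = w r * d%:R + \sum_(c <- cs) costd w d.+1 c.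
Proof.
by rewrite /=; congr (_ + _); elim: cs => [|c cs /= ->]; rewrite ?big_nil ?big_cons.
Qed.

Lemma costdS w d t : costd w d.+1 t = costd w d t + mass w t.
Proof.
elim/rtree_ind_in: t d => r cs IH d; rewrite !costdE massE.
rewrite (eq_big_seq _ (fun c cin => IH c cin d.+1)) big_split /= -natr1.
by rewrite mulrDr mulr1; ring.
Qed.

Lemma costd_ge0 w d t : (forall x, 0 <= w x) -> 0 <= costd w d t.
Proof.
move=> w_ge0; elim/rtree_ind_in: t d => r cs IH d.
by rewrite costdE addr_ge0 ?mulr_ge0 // big_seq sumr_ge0 // => c /IH.
Qed.

Lemma costd_child w d r cs c : (forall x, 0 <= w x) -> c \in cs ->
  costd w d.+1 c <= costd w d (Node r cs).
Proof.
move=> w_ge0 cin; rewrite costdE (big_rem c cin) /= addrCA lerDl addr_ge0 ?mulr_ge0 //.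
by rewrite sumr_ge0 // => c' _; apply: costd_ge0.
Qed.

Lemma costd_lincomb (u v : T -> R) a b d t :
  costd (fun x => a * u x + b * v x) d t = a * costd u d t + b * costd v d t.
Proof.
elim/rtree_ind_in: t d => r cs IH d; rewrite !costdE.
rewrite (eq_big_seq _ (fun c cin => IH c cin d.+1)) big_split -!mulr_sumr /=.
ring.
Qed.

End Costs.

Definition graft t c : rtree T := let: Node r cs := t in Node r (rcons cs c).

Lemma vset_graft t c : vset (graft t c) = vset t :|: vset c.
Proof.
by case: t => r cs; rewrite /graft !vsetE -cats1 big_cat big_seq1 setUA.
Qed.

Lemma root_graft t c : root (graft t c) = root t.
Proof. by case: t. Qed.

Lemma mass_graft (R : realType) (w : T -> R) t c :
  mass w (graft t c) = mass w t + mass w c.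
Proof. by case: t => r cs; rewrite /graft !massE -cats1 big_cat big_seq1 addrA. Qed.

Lemma costd_graft (R : realType) (w : T -> R) d t c :
  costd w d (graft t c) = costd w d t + costd w d.+1 c.
Proof. by case: t => r cs; rewrite /graft !costdE -cats1 big_cat big_seq1 addrA. Qed.

Lemma valid_graft e t c :
  valid_st e t -> valid_st e c -> [disjoint vset t & vset c] ->
  comps e (vset c) = [set vset c] ->
  {in vset t :\ root t & vset c, forall x y, ~~ e x y} ->
  {in vset c & vset t :\ root t, forall x y, ~~ e x y} ->
  valid_st e (graft t c).
Proof.
case: t => r cs va vc dis cc ntc nct; change (valid_st e (Node r (rcons cs c))).
have rc : r \in vset c = false := disjointFr dis (root_in_vset (Node r cs)).
have vsetD : vset (Node r (rcons cs c)) :\ r = vset (Node r cs) :\ r :|: vset c.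
  apply/setP => x; rewrite -[Node r _]/(graft (Node r cs) c) vset_graft !inE.
  by case: (x =P r) => [->|]; rewrite ?rc.
have cnew : vset c \notin comps e (vset (Node r cs) :\ r).
  apply/negP => /comps_sub /subsetP /(_ _ (root_in_vset c)).
  by rewrite inE (disjointFl dis (root_in_vset c)) andbF.
move: va; rewrite !valid_stE vsetD comps_setU // cc map_rcons all_rcons vc setUC.
by case/andP => pe ->; rewrite perm_rcons_enum.
Qed.

End RootedTrees.

Lemma centroid_nodesE (T : finType) (R : realType) (e : rel T) (w : T -> R) a r cs :
  centroid_nodes e w a (Node r cs) =
  is_centroid e w a (vset (Node r cs)) r && all (centroid_nodes e w a) cs.
Proof. by []. Qed.

Lemma is_centroid_root (T : finType) (R : realType) (e : rel T) (w : T -> R) a r cs :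
  valid_st e (Node r cs) ->
  {in cs, forall c, wsum w (vset c) <= a * wsum w (vset (Node r cs))} ->
  is_centroid e w a (vset (Node r cs)) r.
Proof.
move=> va wc; apply/forall_inP => H.
by rewrite (mem_comps_valid _ va) => /mapP [c cin ->]; apply: wc.
Qed.

Lemma imsetD1_inj (A B : finType) (f : A -> B) (X : {set A}) x :
  injective f -> f @: (X :\ x) = (f @: X) :\ f x.
Proof.
move=> f_inj; apply/setP => y; rewrite !inE; apply/imsetP/andP.
  by move=> [z /setD1P [zx zX] ->]; rewrite imset_f // (inj_eq f_inj).
move=> [yx /imsetP [z zX yz]]; exists z => //; rewrite !inE zX andbT.
by apply: contra_neq yx => zx; rewrite yz zx.
Qed.

Lemma perm_map_enum (A B : finType) (g : A -> B) (s : seq A) (X : {set A}) :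
  injective g -> perm_eq s (enum X) -> perm_eq (map g s) (enum (g @: X)).
Proof.
move=> g_inj pe; apply: uniq_perm; rewrite ?enum_uniq //.
  by rewrite map_inj_uniq // (perm_uniq pe) enum_uniq.
move=> y; rewrite mem_enum; apply/mapP/imsetP => [] [x xX ->]; exists x => //.
  by rewrite (perm_mem pe) mem_enum in xX.
by rewrite (perm_mem pe) mem_enum.
Qed.

Lemma wsum_imset (T T' : finType) (R : realType) (f : T -> T') (w : T -> R)
    (w' : T' -> R) k (A : {set T}) :
  injective f -> (forall x, w' (f x) = k * w x) -> wsum w' (f @: A) = k * wsum w A.
Proof.
move=> f_inj fw; rewrite /wsum big_imset /=; last by move=> x y _ _ /f_inj.
by rewrite mulr_sumr; apply: eq_bigr => x _; rewrite fw.
Qed.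

Section TreeMap.
Variables (T T' : finType) (f : T -> T').

Fixpoint rtree_map (t : rtree T) : rtree T' :=
  let: Node r cs := t in Node (f r) (map rtree_map cs).

Lemma rtree_mapE r cs : rtree_map (Node r cs) = Node (f r) (map rtree_map cs).
Proof. by []. Qed.

Lemma root_map t : root (rtree_map t) = f (root t).
Proof. by case: t. Qed.

Lemma vset_map t : vset (rtree_map t) = f @: vset t.
Proof.
elim/rtree_ind_in: t => r cs IH; rewrite rtree_mapE !vsetE imsetU1 big_map.
rewrite (eq_big_seq _ IH); congr (_ |: _).
by rewrite (big_morph (fun A : {set T} => f @: A) (imsetU f) (imset0 f)).
Qed.

Lemma map_vset_map cs :
  [seq vset c | c <- map rtree_map cs] = [seq f @: vset c | c <- cs].
Proof. by rewrite -map_comp; apply: eq_map => c; apply: vset_map. Qed.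

Variable R : realType.
Implicit Types (w : T -> R).

Lemma costd_map w (w' : T' -> R) k d t :
  (forall x, w' (f x) = k * w x) -> costd w' d (rtree_map t) = k * costd w d t.
Proof.
move=> fw; elim/rtree_ind_in: t d => r cs IH d; rewrite rtree_mapE !costdE fw.
by rewrite big_map (eq_big_seq _ (fun c cin => IH c cin d.+1)) -mulr_sumr mulrDr mulrA.
Qed.

Lemma mass_map w (w' : T' -> R) k t :
  (forall x, w' (f x) = k * w x) -> mass w' (rtree_map t) = k * mass w t.
Proof.
move=> fw; elim/rtree_ind_in: t => r cs IH; rewrite rtree_mapE !massE fw.
by rewrite big_map (eq_big_seq _ IH) -mulr_sumr mulrDr.
Qed.

Variables (e : rel T) (e' : rel T').
Hypotheses (f_inj : injective f) (f_edge : forall x y, e' (f x) (f y) = e x y).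

Lemma valid_map t : valid_st e t -> valid_st e' (rtree_map t).
Proof.
elim/rtree_ind_in: t => r cs IH; rewrite rtree_mapE !valid_stE => /andP [pe va].
rewrite -rtree_mapE vset_map -imsetD1_inj // (comps_imset f_inj f_edge) map_vset_map.
rewrite (map_comp (fun A : {set T} => f @: A)) perm_map_enum //=; last exact: imset_inj.
by rewrite all_map; apply/allP => c cin; apply: IH cin (allP va c cin).
Qed.

Lemma centroid_nodes_map w (w' : T' -> R) k a t :
  0 < k -> (forall x, w' (f x) = k * w x) ->
  centroid_nodes e w a t -> centroid_nodes e' w' a (rtree_map t).
Proof.
move=> k_gt0 fw; elim/rtree_ind_in: t => r cs IH.
rewrite rtree_mapE !centroid_nodesE => /andP [ce ca]; rewrite -rtree_mapE.
rewrite /is_centroid vset_map -imsetD1_inj // (comps_imset f_inj f_edge).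
apply/andP; split.
  apply/forall_inP => _ /imsetP [H Hin ->]; rewrite !(wsum_imset _ f_inj fw).
  by rewrite mulrCA ler_pM2l //; apply: (forall_inP ce).
by rewrite all_map; apply/allP => c cin; apply: IH cin (allP ca c cin).
Qed.

End TreeMap.

Section Optima.
Variables (T : finType) (R : realType) (e : rel T).
Implicit Types (w : T -> R) (t : rtree T).

(* [cost_cap s d] bounds the cost at depth [d] of a valid tree on at most [s]
   vertices of weight at most 1: the root is at depth [d] and has fewer than
   [s] children, each on fewer than [s] vertices. *)
Fixpoint cost_cap (s d : nat) : nat :=
  if s is s'.+1 then d + s' * cost_cap s' d.+1 else 0.

Lemma costd_le_cap w s d t : (forall x, w x <= 1) -> valid_st e t ->
  (#|vset t| <= s)%N -> costd w d t <= (cost_cap s d)%:R.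
Proof.
move=> w_le1; elim: s t d => [|s IH] [r cs] d va.
  by rewrite leqn0 cards_eq0 => /eqP/setP/(_ r); rewrite vsetE setU11 inE.
move=> size_t; have card_rest : (#|vset (Node r cs) :\ r| <= s)%N.
  by rewrite (cardsD1 r) vsetE setU11 -vsetE in size_t.
have size_cs : (size cs <= s)%N.
  move: (va); rewrite valid_stE => /andP [pe _].
  rewrite -(size_map (@vset T)) (perm_size pe) -cardE.
  exact: leq_trans (leq_imset_card _ _) card_rest.
have child_le c : c \in cs -> costd w d.+1 c <= (cost_cap s d.+1)%:R.
  move=> cin; apply: IH; first exact: valid_child va cin.
  apply: leq_trans card_rest; apply: subset_leq_card; apply: (@comps_sub _ e).
  by rewrite (mem_comps_valid _ va) map_f.
rewrite costdE natrD natrM lerD //; first by rewrite -[X in _ <= X]mul1r ler_wpM2r.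
apply: (@le_trans _ _ (\sum_(c <- cs) (cost_cap s d.+1)%:R)).
  by rewrite big_seq [X in _ <= X]big_seq; apply: ler_sum => c /child_le.
rewrite big_const_seq count_predT iter_addr_0 -[_ *+ size cs]mulr_natl.
by rewrite ler_wpM2r ?ler_nat.
Qed.

Lemma OPT_le_cost w t : (forall x, 0 <= w x) -> search_tree e t -> OPT e w <= cost w t.
Proof.
move=> w_ge0 st; apply: ge_inf; last by exists t.
by exists 0 => _ [t' [_ ->]]; apply: costd_ge0.
Qed.

Lemma OPT_ge w b : (exists t, search_tree e t) ->
  (forall t, search_tree e t -> b <= cost w t) -> b <= OPT e w.
Proof.
move=> [t st] lb; apply: lb_le_inf; first by exists (cost w t); exists t.
by move=> _ [t' [st' ->]]; apply: lb.
Qed.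

Lemma cost_le_cent w a t : (forall x, w x <= 1) -> centroid_tree e w a t ->
  cost w t <= cent e w a.
Proof.
move=> w_le1 ct; rewrite /cent asboolT; last by exists t.
apply: ub_le_sup; last by exists t.
exists (cost_cap #|T| 1)%:R => _ [t' [/andP [/andP [va _] _] ->]].
exact: costd_le_cap va (max_card _).
Qed.

End Optima.

Lemma connect_of_comps (T : finType) (e : rel T) (A : {set T}) :
  comps e A = [set A] -> {in A &, forall x y, connect (induced e A) x y}.
Proof.
move=> cA x y xA yA; have /set1P compA : comp e A x \in [set A].
  by rewrite -cA comp_in_comps.
by have := yA; rewrite -{1}compA inE => /andP [].
Qed.

Lemma comps_setU_edge (T : finType) (e : rel T) (A B : {set T}) a b :
  symmetric e -> comps e A = [set A] -> comps e B = [set B] ->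
  a \in A -> b \in B -> e a b -> comps e (A :|: B) = [set A :|: B].
Proof.
move=> esym cA cB aA bB eab; set AB := A :|: B.
have ABsym : connect_sym (induced e AB).
  by apply: sym_connect_sym => x y; rewrite /induced /= esym andbCA.
have lift (C : {set T}) : C \subset AB ->
    {in C &, forall x y, connect (induced e C) x y} ->
    {in C &, forall x y, connect (induced e AB) x y}.
  by move=> sC cC x y xC yC; apply: homo_connect (induced_mono sC) _ _ (cC x y xC yC).
have to_a : {in AB, forall x, connect (induced e AB) x a}.
  move=> x /setUP [xA|xB].
    exact: lift (subsetUl A B) (connect_of_comps cA) x a xA aA.
  apply: connect_trans (lift _ (subsetUr A B) (connect_of_comps cB) x b xB bB) _.
  by rewrite ABsym; apply: connect1; rewrite /induced /= !inE aA bB orbT eab.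
have aAB : a \in AB by rewrite inE aA.
apply: (comps_connected aAB) => x y xAB yAB.
by rewrite (connect_trans (to_a x xAB)) // ABsym to_a.
Qed.

Lemma card_edges (T : finType) (e : rel T) :
  #|[set p : T * T | e p.1 p.2]| = (\sum_(x : T) \sum_(y : T) (e x y : nat))%N.
Proof.
rewrite -sum1_card big_mkcond /= pair_big /=; apply: eq_bigr => -[x y] _.
by rewrite inE /=; case: (e x y).
Qed.

Fixpoint V (n : nat) : finType :=
  if n is n'.+1 then (V n' + (unit + V n'))%type else unit.

Definition lcopy n (a : V n) : V n.+1 := inl a.
Definition rcopy n (b : V n) : V n.+1 := inr (inr b).
Definition mid n : V n.+1 := inr (inl tt).
Arguments lcopy {n}.
Arguments rcopy {n}.

Fixpoint base n : V n := if n is n'.+1 then lcopy (base n') else tt.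

(* In [V n.+1], the vertex [mid n] is joined to the bases of both copies of
   [V n]; the base of [V n.+1] is that of the left copy. *)
Fixpoint E (n : nat) : rel (V n) :=
  match n return rel (V n) with
  | 0 => fun _ _ => false
  | n'.+1 => fun x y =>
    match x, y with
    | inl a, inl b | inr (inr a), inr (inr b) => E a b
    | inr (inl _), inl b | inr (inl _), inr (inr b) => b == base n'
    | inl a, inr (inl _) | inr (inr a), inr (inl _) => a == base n'
    | _, _ => false
    end
  end.

Lemma lcopy_inj n : injective (@lcopy n). Proof. by move=> a b []. Qed.
Lemma rcopy_inj n : injective (@rcopy n). Proof. by move=> a b []. Qed.
Lemma E_lcopy n a b : E (lcopy a) (lcopy b) = @E n a b. Proof. by []. Qed.
Lemma E_rcopy n a b : E (rcopy a) (rcopy b) = @E n a b. Proof. by []. Qed.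

Lemma mem_lcopy n (x : V n.+1) (H : {set V n}) :
  (x \in lcopy @: H) = (if x is inl a then a \in H else false).
Proof.
case: x => [a|[[]|b]]; try by apply/imsetP => -[].
exact: (mem_imset _ a (@lcopy_inj n)).
Qed.

Lemma mem_rcopy n (x : V n.+1) (H : {set V n}) :
  (x \in rcopy @: H) = (if x is inr (inr b) then b \in H else false).
Proof.
case: x => [a|[[]|b]]; try by apply/imsetP => -[].
exact: (mem_imset _ b (@rcopy_inj n)).
Qed.

Lemma setT_V n :
  [set: V n.+1] = lcopy @: setT :|: (rcopy @: setT :|: [set mid n]).
Proof. by apply/setP => -[a|[[]|b]]; rewrite !inE mem_lcopy mem_rcopy ?inE. Qed.

Lemma E_sym n : symmetric (@E n).
Proof. by elim: n => [//|n IH] [a|[[]|a]] [b|[[]|b]] //=. Qed.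

Lemma E_irr n : irreflexive (@E n).
Proof. by elim: n => [//|n IH] [a|[[]|a]] //=. Qed.

Lemma E_connect n x y : connect (@E n) x y.
Proof.
elim: n x y => [[] []|n IH x y]; first exact: connect0.
have to_mid (z : V n.+1) : connect (@E n.+1) z (mid n).
  case: z => [a|[[]|b]]; [| exact: connect0 |].
    apply: connect_trans (homo_connect (f := @lcopy n) _ (IH a (base n))) _ => //.
    by apply: connect1; rewrite /= eqxx.
  apply: connect_trans (homo_connect (f := @rcopy n) _ (IH b (base n))) _ => //.
  by apply: connect1; rewrite /= eqxx.
by rewrite (connect_trans (to_mid x)) // (sym_connect_sym (@E_sym n.+1)) to_mid.
Qed.

Lemma big_V (M : Type) (idx : M) (op : Monoid.com_law idx) n (F : V n.+1 -> M) :
  \big[op/idx]_x F x =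
  op (\big[op/idx]_a F (lcopy a)) (op (F (mid n)) (\big[op/idx]_b F (rcopy b))).
Proof. by rewrite !big_sumType /= (big_pred1 tt) // => -[]. Qed.

Definition edge_count n : nat := \sum_(x : V n) \sum_(y : V n) (@E n x y : nat).

Lemma sumn_V n (F : V n.+1 -> nat) :
  (\sum_x F x = \sum_a F (lcopy a) + (F (mid n) + \sum_b F (rcopy b)))%N.
Proof. exact: big_V. Qed.

Lemma edge_countS n : edge_count n.+1 = (2 * edge_count n + 4)%N.
Proof.
have sum_base : (\sum_(a : V n) (a == base n : nat) = 1)%N.
  by rewrite (bigD1 (base n)) //= eqxx big1 // => a /negbTE ->.
have row_l a : (\sum_y E (lcopy a) y = \sum_y @E n a y + (a == base n))%N.
  by rewrite sumn_V big1_eq addn0.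
have row_r b : (\sum_y E (rcopy b) y = (b == base n) + \sum_y @E n b y)%N.
  by rewrite sumn_V big1_eq.
have row_mid : (\sum_y E (mid n) y = 2)%N by rewrite sumn_V /= !sum_base.
rewrite /edge_count sumn_V row_mid.
under eq_bigr do rewrite row_l.
under [X in (_ + (_ + X))%N]eq_bigr do rewrite row_r.
rewrite !big_split /= sum_base; lia.
Qed.

Lemma card_V n : #|V n.+1| = (#|V n| + (1 + #|V n|))%N.
Proof. by rewrite !card_sum card_unit. Qed.

Lemma card_V_gt0 n : (0 < #|V n|)%N.
Proof. by elim: n => [|n IH]; rewrite ?card_unit // card_V addn_gt0 IH. Qed.

Lemma E_tree n : is_tree (@E n).
Proof.
split; [exact: E_sym | exact: E_irr | exact: card_V_gt0 | exact: E_connect |].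
rewrite card_edges -/(edge_count n); elim: n => [|n IH].
  by rewrite /edge_count big1 ?card_unit // => x _; rewrite big1.
by rewrite edge_countS IH card_V; have := card_V_gt0 n; lia.
Qed.

Lemma comps_V n : comps (@E n) [set: V n] = [set [set: V n]].
Proof. exact: comps_setT (base n) (@E_connect n). Qed.

Lemma comps_image k n (g : V k -> V n) :
  injective g -> (forall a b, E (g a) (g b) = E a b) ->
  comps (@E n) (g @: setT) = [set g @: setT].
Proof. by move=> g_inj g_edge; rewrite (comps_imset g_inj g_edge) comps_V imset_set1. Qed.

Fixpoint opt_tree n : rtree (V n) :=
  match n return rtree (V n) with
  | 0 => Node tt [::]
  | n'.+1 => graft (rtree_map lcopy (opt_tree n'))
                   (graft (rtree_map rcopy (opt_tree n')) (Node (mid n') [::]))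
  end.

Fixpoint cent_tree n : rtree (V n) :=
  match n return rtree (V n) with
  | 0 => Node tt [::]
  | n'.+1 => Node (mid n') [:: rtree_map lcopy (cent_tree n');
                               rtree_map rcopy (cent_tree n')]
  end.

Lemma opt_treeS n : opt_tree n.+1 =
  graft (rtree_map lcopy (opt_tree n))
        (graft (rtree_map rcopy (opt_tree n)) (Node (mid n) [::])).
Proof. by []. Qed.

Lemma cent_tree_graft n : cent_tree n.+1 =
  graft (graft (Node (mid n) [::]) (rtree_map lcopy (cent_tree n)))
        (rtree_map rcopy (cent_tree n)).
Proof. by []. Qed.

Lemma root_opt_tree n : root (opt_tree n) = base n.
Proof. by elim: n => // n IH; rewrite opt_treeS root_graft root_map IH. Qed.

Lemma vset_opt_tree n : vset (opt_tree n) = setT.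
Proof.
elim: n => [|n IH]; first by apply/setP => -[]; rewrite vset_leaf !inE.
by rewrite opt_treeS !vset_graft !vset_map IH vset_leaf setT_V.
Qed.

Lemma vset_cent_tree n : vset (cent_tree n) = setT.
Proof.
elim: n => [|n IH]; first by apply/setP => -[]; rewrite vset_leaf !inE.
rewrite cent_tree_graft !vset_graft !vset_map IH vset_leaf setT_V.
by apply/setP => x; rewrite !inE -orbA orbC orbA.
Qed.

Lemma valid_opt_tree n : valid_st (@E n) (opt_tree n).
Proof.
elim: n => [|n IH]; first exact: valid_leaf.
have rest (h : V n -> V n.+1) : injective h ->
    vset (rtree_map h (opt_tree n)) :\ root (rtree_map h (opt_tree n)) =
    h @: (setT :\ base n).
  by move=> h_inj; rewrite vset_map root_map vset_opt_tree root_opt_tree imsetD1_inj.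
have va_l := valid_map (@lcopy_inj n) (@E_lcopy n) IH.
have va_r := valid_map (@rcopy_inj n) (@E_rcopy n) IH.
have va_rmid :
    valid_st (@E n.+1) (graft (rtree_map rcopy (opt_tree n)) (Node (mid n) [::])).
  apply: valid_graft va_r (valid_leaf _ _) _ _ _ _;
    rewrite ?rest ?vset_map ?vset_opt_tree ?vset_leaf ?comps_set1 //;
    try exact: rcopy_inj.
  - by rewrite disjoint_subset; apply/subsetP => -[a|[[]|b]]; rewrite !inE ?mem_rcopy.
  - by move=> x y /imsetP [b /setD1P [bb _] ->] /set1P ->.
  - by move=> x y /set1P -> /imsetP [b /setD1P [bb _] ->].
rewrite opt_treeS; apply: valid_graft va_l va_rmid _ _ _ _;
  rewrite ?rest ?vset_graft ?vset_map ?vset_opt_tree ?vset_leaf; try exact: lcopy_inj.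
- rewrite disjoint_subset; apply/subsetP => -[a|[[]|b]];
    by rewrite !inE ?mem_lcopy ?mem_rcopy ?inE.
- apply: (comps_setU_edge (@E_sym n.+1) (comps_image (@rcopy_inj n) (@E_rcopy n))
    (comps_set1 _ _) (imset_f _ (in_setT (base n))) (set11 (mid n))).
  by rewrite /= eqxx.
- by move=> x y /imsetP [a /setD1P [ab _] ->] /setUP [/imsetP [b _ ->]|/set1P ->].
- by move=> x y /setUP [/imsetP [b _ ->]|/set1P ->] /imsetP [a /setD1P [ab _] ->].
Qed.

Lemma valid_cent_tree n : valid_st (@E n) (cent_tree n).
Proof.
elim: n => [|n IH]; first exact: valid_leaf.
have va_l := valid_map (@lcopy_inj n) (@E_lcopy n) IH.
have va_r := valid_map (@rcopy_inj n) (@E_rcopy n) IH.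
have va_midl :
    valid_st (@E n.+1) (graft (Node (mid n) [::]) (rtree_map lcopy (cent_tree n))).
  apply: valid_graft (valid_leaf _ _) va_l _ _ _ _;
    rewrite ?vset_map ?vset_cent_tree ?vset_leaf /= ?setDv.
  - by rewrite disjoint_subset; apply/subsetP => -[a|[[]|b]]; rewrite !inE ?mem_lcopy.
  - exact: comps_image (@lcopy_inj n) (@E_lcopy n).
  - by move=> x y; rewrite inE.
  - by move=> x y _; rewrite inE.
rewrite cent_tree_graft; apply: valid_graft va_midl va_r _ _ _ _;
  rewrite ?vset_graft ?root_graft ?vset_map ?vset_cent_tree ?vset_leaf.
- rewrite disjoint_subset; apply/subsetP => -[a|[[]|b]];
    by rewrite !inE ?mem_lcopy ?mem_rcopy ?inE.
- exact: comps_image (@rcopy_inj n) (@E_rcopy n).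
- by move=> x y /setD1P [xm /setUP [/set1P xmid|/imsetP [a _ ->]]] /imsetP [b _ ->];
    rewrite ?xmid ?eqxx in xm.
- by move=> x y /imsetP [b _ ->] /setD1P [ym /setUP [/set1P ymid|/imsetP [a _ ->]]];
    rewrite ?ymid ?eqxx in ym.
Qed.

Lemma affine_unbounded (R : realType) (c : R) : 0 < c ->
  forall M : R, exists N : nat, forall n, (N <= n)%N -> M < 1 + n%:R * c.
Proof.
move=> c_gt0 M; have Mc_ge0 : 0 <= `|M| / c by rewrite divr_ge0 // ltW.
exists (Num.Def.archi_bound (`|M| / c)) => n le_N_n.
have : `|M| < n%:R * c.
  rewrite -ltr_pdivrMr //; apply: lt_le_trans (archi_boundP Mc_ge0) _.
  by rewrite ler_nat.
by have := ler_norm M; lra.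
Qed.

Section Weights.
Variables (R : realType) (alpha : R).
Hypotheses (half_le_alpha : 2^-1 <= alpha) (alpha_lt1 : alpha < 1).

Lemma alpha_gt0 : 0 < alpha.
Proof. by apply: lt_le_trans half_le_alpha; rewrite invr_gt0. Qed.

Lemma subr_alpha_gt0 : 0 < 1 - alpha.
Proof. by rewrite subr_gt0. Qed.

Lemma subr_alpha_le : 1 - alpha <= alpha.
Proof.
have := half_le_alpha; rewrite -[2^-1]mul1r ler_pdivrMr ?ltr0n //.
by move=> h; lra.
Qed.

Fixpoint W n : V n -> R :=
  match n return V n -> R with
  | 0 => fun _ => 1
  | n'.+1 => fun x => match x with
     | inl a => alpha * W a
     | inr (inl _) => 0
     | inr (inr b) => (1 - alpha) * W b
     end
  end.

Lemma W_lcopy n (a : V n) : W (lcopy a) = alpha * W a. Proof. by []. Qed.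
Lemma W_rcopy n (b : V n) : W (rcopy b) = (1 - alpha) * W b. Proof. by []. Qed.

Lemma W_ge0 n (x : V n) : 0 <= W x.
Proof.
have := alpha_gt0; have := subr_alpha_gt0.
by elim: n x => [//|n IH] [a|[[]|b]] ? ? //=; rewrite mulr_ge0 ?IH ?ltW.
Qed.

Lemma W_le1 n (x : V n) : W x <= 1.
Proof.
have := alpha_gt0; have := subr_alpha_gt0.
elim: n x => [//|n IH] [a|[[]|b]] ? ? //=.
  by have := IH a; have := W_ge0 a; nra.
by have := IH b; have := W_ge0 b; nra.
Qed.

Lemma sumr_V n (F : V n.+1 -> R) :
  \sum_x F x = \sum_a F (lcopy a) + (F (mid n) + \sum_b F (rcopy b)).
Proof. exact: big_V. Qed.

Lemma wsum_W n : wsum (@W n) setT = 1.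
Proof.
rewrite /wsum; under eq_bigl do rewrite in_setT.
elim: n => [|n IH]; first by rewrite (big_pred1 tt) // => -[].
by rewrite sumr_V /= -!mulr_sumr IH; ring.
Qed.

Lemma mass_opt_tree n : mass (@W n) (opt_tree n) = 1.
Proof.
elim: n => [|n IH]; first by rewrite massE big_nil addr0.
rewrite opt_treeS !mass_graft (mass_map _ (@W_lcopy n)) (mass_map _ (@W_rcopy n)).
rewrite IH.
by rewrite massE big_nil /=; ring.
Qed.

Lemma cost_opt_tree n : cost (@W n) (opt_tree n) = 1 + n%:R * (1 - alpha).
Proof.
rewrite /cost; elim: n => [|n IH]; first by rewrite costdE big_nil mul0r !addr0 mulr1.
rewrite opt_treeS !costd_graft.
rewrite (costd_map _ _ (@W_lcopy n)) (costd_map _ _ (@W_rcopy n)).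
by rewrite (costdS _ 1) IH mass_opt_tree costdE big_nil -natr1 /=; ring.
Qed.

Lemma mass_cent_tree n : mass (@W n) (cent_tree n) = 1.
Proof.
elim: n => [|n IH]; first by rewrite massE big_nil addr0.
rewrite cent_tree_graft !mass_graft (mass_map _ (@W_lcopy n)) (mass_map _ (@W_rcopy n)).
rewrite IH.
by rewrite massE big_nil /=; ring.
Qed.

Lemma cost_cent_tree n : cost (@W n) (cent_tree n) = n.+1%:R.
Proof.
rewrite /cost; elim: n => [|n IH]; first by rewrite costdE big_nil addr0 mulr1.
rewrite cent_tree_graft !costd_graft.
rewrite (costd_map _ _ (@W_lcopy n)) (costd_map _ _ (@W_rcopy n)).
by rewrite (costdS _ 1) IH mass_cent_tree costdE big_nil -[n.+2%:R]natr1 /=; ring.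
Qed.

Lemma centroid_cent_tree n : centroid_nodes (@E n) (@W n) alpha (cent_tree n).
Proof.
elim: n => [|n IH].
  by rewrite centroid_nodesE andbT; apply: is_centroid_root; rewrite ?valid_leaf.
have va := valid_cent_tree n.+1.
rewrite centroid_nodesE; apply/and3P; split; last rewrite andbT.
- apply: (is_centroid_root va) => c.
  rewrite -[vset (Node _ _)]/(vset (cent_tree n.+1)) vset_cent_tree wsum_W mulr1.
  rewrite !inE => /orP [] /eqP ->; rewrite vset_map vset_cent_tree.
    by rewrite (wsum_imset _ (@lcopy_inj n) (@W_lcopy n)) wsum_W mulr1.
  by rewrite (wsum_imset _ (@rcopy_inj n) (@W_rcopy n)) wsum_W mulr1 subr_alpha_le.
- by have := centroid_nodes_map (@lcopy_inj n) (@E_lcopy n) alpha_gt0 (@W_lcopy n) IH.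
- have := centroid_nodes_map (@rcopy_inj n) (@E_rcopy n) subr_alpha_gt0 (@W_rcopy n).
  by apply.
Qed.

Definition pushforward k n (f : V k -> V n) : V n -> R :=
  fun y => \sum_(x | f x == y) W x.

Lemma pushforward_ge0 k n (f : V k -> V n) y : 0 <= pushforward f y.
Proof. by apply: sumr_ge0 => x _; apply: W_ge0. Qed.

Lemma pushforward_id n : pushforward (@id (V n)) = @W n.
Proof. by apply: funext => y; rewrite /pushforward big_pred1_eq. Qed.

Lemma pushforward_point n (f : V 0 -> V n) : pushforward f (f tt) = 1.
Proof. by rewrite /pushforward (big_pred1 tt) ?eqxx // => -[]; rewrite eqxx. Qed.

Lemma pushforward_split k n (f : V k.+1 -> V n) :
  pushforward f = (fun y => alpha * pushforward (f \o lcopy) y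
                           + (1 - alpha) * pushforward (f \o rcopy) y).
Proof.
apply: funext => y; rewrite /pushforward big_mkcond sumr_V /= if_same add0r.
rewrite !mulr_sumr [X in _ = X + _]big_mkcond [X in _ = _ + X]big_mkcond /=.
by congr (_ + _); apply: eq_bigr => x _; case: ifP; rewrite ?mulr0.
Qed.

Lemma costd_pushforward_descend n r cs k (g : V k -> V n) d :
  {in cs, forall c, valid_st (@E n) c -> g @: setT \subset vset c ->
     d.+1%:R + k%:R * (1 - alpha) <= costd (pushforward g) d.+1 c} ->
  valid_st (@E n) (Node r cs) ->
  injective g -> (forall a b, E (g a) (g b) = E a b) ->
  g @: setT \subset vset (Node r cs) -> r \notin g @: setT ->
  d.+1%:R + k%:R * (1 - alpha) <= costd (pushforward g) d (Node r cs).
Proof.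
move=> child_bound va g_inj g_edge subg rg.
have subg' : g @: setT \subset vset (Node r cs) :\ r.
  apply/subsetP => y yg; rewrite in_setD1 (subsetP subg) // andbT.
  by apply: contraNneq rg => <-.
have [c cin subc] := sub_child va subg' (comps_image g_inj g_edge).
apply: le_trans (costd_child d r (pushforward_ge0 g) cin).
exact: child_bound cin (valid_child va cin) subc.
Qed.

(* This is where [1/2 <= alpha] enters: [min alpha (1 - alpha) = 1 - alpha]. *)
Lemma mix_ge (x y1 y2 : R) (b1 b2 : bool) : b1 || b2 ->
  x + b1%:R <= y1 -> x + b2%:R <= y2 -> x + (1 - alpha) <= alpha * y1 + (1 - alpha) * y2.
Proof.
move=> b12 h1 h2; have a_gt0 := alpha_gt0; have a1_gt0 := subr_alpha_gt0.
have m1 := ler_wpM2l (ltW a_gt0) h1; have m2 := ler_wpM2l (ltW a1_gt0) h2.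
have b1_ge0 := mulr_ge0 (ltW a_gt0) (ler0n R b1).
have b2_ge0 := mulr_ge0 (ltW a1_gt0) (ler0n R b2).
have := subr_alpha_le; case/orP: b12 => b; rewrite b /= in m1 m2 b1_ge0 b2_ge0; lra.
Qed.

(* A search (sub)tree containing an embedded copy of [V k] pays at least
   [k (1 - alpha)] beyond the depth [d] of its root for the pushed-forward
   weight: below the first vertex of the copy, the half of the copy not
   containing it sinks one level deeper. *)
Lemma costd_pushforward_ge n t k (f : V k -> V n) d :
  injective f -> (forall a b, E (f a) (f b) = E a b) -> valid_st (@E n) t ->
  f @: setT \subset vset t -> d%:R + k%:R * (1 - alpha) <= costd (pushforward f) d t.
Proof.
elim/rtree_ind_in: t k f d => r cs IHt k f d f_inj f_edge va sub.
have descend k' (g : V k' -> V n) (g_inj : injective g)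
    (g_edge : forall a b, E (g a) (g b) = E a b) :=
  costd_pushforward_descend (fun c cin => IHt c cin k' g d.+1 g_inj g_edge)
    va g_inj g_edge.
have [rf|rnf] := boolP (r \in f @: setT); last first.
  by apply: le_trans (descend k f f_inj f_edge sub rnf); rewrite lerD2r ler_nat.
elim: k f f_inj f_edge sub rf => [|k IHk] f f_inj f_edge sub rf.
  have {rf} -> : r = f tt by case/imsetP: rf => -[] _ ->.
  rewrite costdE pushforward_point mul1r mul0r addr0 lerDl big_seq sumr_ge0 // => c _.
  exact: costd_ge0 (pushforward_ge0 f).
have half (h : V k -> V k.+1) : injective h -> (forall a b, E (h a) (h b) = E a b) ->
    d%:R + k%:R * (1 - alpha) + (r \notin (f \o h) @: setT)%:R
      <= costd (pushforward (f \o h)) d (Node r cs).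
  move=> h_inj h_edge; set g := f \o h.
  have g_inj : injective g by move=> a b /f_inj /h_inj.
  have g_edge a b : E (g a) (g b) = E a b by rewrite /g /= f_edge h_edge.
  have subg : g @: setT \subset vset (Node r cs).
    by apply: subset_trans sub; apply/subsetP => _ /imsetP [a _ ->]; apply: imset_f.
  case: (boolP (r \in g @: setT)) => rg; first by rewrite addr0; apply: IHk.
  by have := descend k g g_inj g_edge subg rg; rewrite /= -natr1; lra.
have not_both : (r \notin (f \o lcopy) @: setT) || (r \notin (f \o rcopy) @: setT).
  by rewrite -negb_and; apply/andP => -[/imsetP [a _ ->] /imsetP [b _ /f_inj]].
rewrite pushforward_split costd_lincomb -[k.+1%:R]natr1 mulrDl mul1r addrA.
apply: mix_ge not_both (half _ (@lcopy_inj k) (@E_lcopy k)) _.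
exact: half _ (@rcopy_inj k) (@E_rcopy k).
Qed.

Lemma cost_search_tree_ge n t :
  search_tree (@E n) t -> 1 + n%:R * (1 - alpha) <= cost (@W n) t.
Proof.
case/andP => va /eqP vt; rewrite /cost -pushforward_id.
have := costd_pushforward_ge 1 (@inj_id _) (fun a b => erefl) va.
by rewrite vt subsetT; apply.
Qed.

Lemma OPT_W n : OPT (@E n) (@W n) = 1 + n%:R * (1 - alpha).
Proof.
have st : search_tree (@E n) (opt_tree n).
  by rewrite /search_tree valid_opt_tree vset_opt_tree eqxx.
apply/le_anti/andP; split.
  by rewrite -cost_opt_tree OPT_le_cost // => x; apply: W_ge0.
by apply: OPT_ge; [exists (opt_tree n) | apply: cost_search_tree_ge].
Qed.

Lemma cent_W_ge n : n.+1%:R <= cent (@E n) (@W n) alpha.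
Proof.
rewrite -cost_cent_tree; apply: cost_le_cent; first exact: W_le1.
rewrite /centroid_tree /search_tree valid_cent_tree vset_cent_tree eqxx.
exact: centroid_cent_tree.
Qed.

End Weights.

Theorem theorem8 (R : realType) (alpha : R) :
  2^-1 <= alpha -> alpha < 1 ->
  exists (T : nat -> finType) (e : forall n, rel (T n)) (w : forall n, T n -> R),
    [/\ (forall n, is_tree (e n)),
        (forall n (x : T n), 0 <= w n x),
        (forall n, wsum (w n) [set: T n] = 1),
        (forall M : R, exists N : nat, forall n : nat, (N <= n)%N ->
            M < OPT (e n) (w n)) &
        (forall n, cent (e n) (w n) alpha >=
            (1 - alpha)^-1 * OPT (e n) (w n) - alpha / (1 - alpha))].
Proof.
move=> half_le_alpha alpha_lt1; have alpha1 := subr_alpha_gt0 alpha_lt1.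
exists V, E, (fun n => @W R alpha n); split => [n|n x|n|M|n].
- exact: E_tree.
- exact: W_ge0.
- exact: wsum_W.
- have [N bound] := affine_unbounded alpha1 M.
  by exists N => n /bound; rewrite OPT_W.
- rewrite OPT_W //; apply: le_trans (cent_W_ge half_le_alpha alpha_lt1 n).
  by rewrite le_eqVlt; apply/orP; left; apply/eqP; field; rewrite gt_eqF.
Qed.
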